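(* Let $c\ge0$. Let $w^*$ be an optimal solution, with optimal value $\lambda_n^*$, of $$\min_{w,\lambda_n}\ \lambda_n\quad\text{s.t.}\quad \sum_{\{i,j\}\in E_3}w_{ij}L_{ij}+L_0-\lambda_nI\preceq 0,\ \ \sum_{\{i,j\}\in E_3}w_{ij}\ge c,\ \ w_{ij}\ge0,$$ and let $(\xi,v_1,\dots,v_n)$ be an optimal solution of the embedding problem $$\max_{v_i\in\mathbb{R}^n,\ \xi\in\mathbb{R}}\ c\xi+\sum_{\{i,j\}\in E_1\cup E_2}\|v_i-v_j\|^2\quad\text{s.t.}\quad \|v_i-v_j\|^2\ge\xi\ \ \forall\{i,j\}\in E_3,\ \ \sum_{i\in V}\|v_i\|^2=1.$$ Then for every $p\in\mathbb{R}^n$ the projected vector $y=(p^Tv_1,\dots,p^Tv_n)^T$ satisfies $L(w^* )y=\lambda_n^*y$, where $L(w^* )=\sum_{\{i,j\}\in E_3}w^*_{ij}L_{ij}+L_0$; i.e. projecting the optimal embedding onto a one-dimensional subspace yields an eigenvector for the largest eigenvalue $\lambda_n^*$.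
   Context: A multiplex network consists of two layers $G_1=(V_1,E_1)$ and $G_2=(V_2,E_2)$, simple undirected graphs with $|V_1|=|V_2|=N$; vertices of $G_1$ are numbered $1,\dots,N$, those of $G_2$ are numbered $N+1,\dots,2N$, $n=2N$, $V=V_1\cup V_2$. The interlayer edges form the perfect matching $E_3=\{\{i,N+i\}:i=1,\dots,N\}$ with nonnegative weights $w_{ij}$. $L_{ij}=(\delta_i-\delta_j)(\delta_i-\delta_j)^T$, $\delta_i$ the $i$-th standard basis vector of $\mathbb{R}^n$; $L_0=\sum_{\{i,j\}\in E_1\cup E_2}L_{ij}$. *)

From HB Require Import structures.
From mathcomp Require Import all_boot all_order all_algebra.
From mathcomp Require Import reals.
Set Implicit Arguments. Unset Strict Implicit. Unset Printing Implicit Defensive.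
Import Order.TTheory GRing.Theory Num.Theory.
Local Open Scope ring_scope.

Section Multiplex.
Variable R : realType.
Variable N : nat.

(* n = 2N vertices: layer 1 = lshift N i (vertex i+1 in the paper),
   layer 2 = rshift N i (vertex N+i+1 in the paper), for i : 'I_N. *)
Notation n := (N + N)%N.

Definition lay1 (i : 'I_N) : 'I_n := lshift N i.
Definition lay2 (i : 'I_N) : 'I_n := rshift N i.

Definition delta (i : 'I_n) : 'cV[R]_n := delta_mx i 0.

Definition Lij (i j : 'I_n) : 'M[R]_n :=
  (delta i - delta j) *m (delta i - delta j)^T.

Definition edge_sum (V : nmodType) (e : rel 'I_N) (f : 'I_N -> 'I_N -> V) : V :=
  \sum_(i : 'I_N) \sum_(j : 'I_N | (i < j)%N && e i j) f i j.

Definition L0 (e1 e2 : rel 'I_N) : 'M[R]_n :=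
  edge_sum e1 (fun i j => Lij (lay1 i) (lay1 j))
  + edge_sum e2 (fun i j => Lij (lay2 i) (lay2 j)).

(* L(w) = sum_{ {i,N+i} in E_3 } w_i L_{i,N+i} + L_0 *)
Definition Lw (e1 e2 : rel 'I_N) (w : 'I_N -> R) : 'M[R]_n :=
  \sum_(i : 'I_N) w i *: Lij (lay1 i) (lay2 i) + L0 e1 e2.

Definition negsemidef (A : 'M[R]_n) : Prop :=
  forall x : 'cV[R]_n, (x^T *m A *m x) 0 0 <= 0.

Definition sdp_feasible (c : R) (e1 e2 : rel 'I_N) (w : 'I_N -> R) (lam : R) : Prop :=
  [/\ negsemidef (Lw e1 e2 w - lam%:M), c <= \sum_(i : 'I_N) w i
    & forall i, 0 <= w i].

Definition sdp_optimal (c : R) (e1 e2 : rel 'I_N) (w : 'I_N -> R) (lam : R) : Prop :=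
  sdp_feasible c e1 e2 w lam /\
  forall w' lam', sdp_feasible c e1 e2 w' lam' -> lam <= lam'.

Definition sqnorm (x : 'cV[R]_n) : R := \sum_(k : 'I_n) x k 0 ^+ 2.

Definition emb_feasible (e1 e2 : rel 'I_N) (xi : R) (v : 'I_n -> 'cV[R]_n) : Prop :=
  (forall i : 'I_N, xi <= sqnorm (v (lay1 i) - v (lay2 i))) /\
  \sum_(i : 'I_n) sqnorm (v i) = 1.

Definition emb_obj (c : R) (e1 e2 : rel 'I_N) (xi : R) (v : 'I_n -> 'cV[R]_n) : R :=
  c * xi + (edge_sum e1 (fun i j => sqnorm (v (lay1 i) - v (lay1 j)))
            + edge_sum e2 (fun i j => sqnorm (v (lay2 i) - v (lay2 j)))).

Definition emb_optimal (c : R) (e1 e2 : rel 'I_N) (xi : R) (v : 'I_n -> 'cV[R]_n) : Prop :=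
  emb_feasible e1 e2 xi v /\
  forall xi' v', emb_feasible e1 e2 xi' v' -> emb_obj c e1 e2 xi' v' <= emb_obj c e1 e2 xi v.

Definition proj (p : 'cV[R]_n) (v : 'I_n -> 'cV[R]_n) : 'cV[R]_n :=
  \col_(i < n) (p^T *m v i) 0 0.

End Multiplex.

From HB Require Import structures.
From mathcomp Require Import all_boot all_order all_algebra.
From mathcomp Require Import reals.
From mathcomp Require Import ring lra.
From Stdlib Require Import Classical.
Import Order.TTheory GRing.Theory Num.Theory.
Local Open Scope ring_scope.
Set Implicit Arguments. Unset Strict Implicit. Unset Printing Implicit Defensive.

(* Write the embedding through its coordinate slices z_1, ..., z_n, so that
   X = sum_k z_k z_k^T is a trace-one psd matrix with tr(L_ij X) = |v_i - v_j|^2.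
   For feasible (w, lam) and (xi, v), weak duality reads
     lam = lam tr X >= tr(L(w) X) >= c xi + sum_{E1 u E2} |v_i - v_j|^2.
   If lam is at most the embedding value, every step is an equality, so
   tr((lam I - L(w)) X) = 0 with lam I - L(w) psd, hence (lam I - L(w)) z_k = 0
   for every slice, and y = sum_k p_k z_k is an eigenvector.
   That lam* is at most the optimal embedding value is a minimax statement
   between probability vectors on E3 and trace-one psd matrices; it is proved
   by Blackwell's approachability argument for the nonnegative orthant, and
   Caratheodory's theorem fits the resulting Gram matrix into n slices. *)

Section QuadraticForm.
Variables (R : realFieldType) (m : nat).
Implicit Types (A B : 'M[R]_m) (x y z : 'cV[R]_m).

Definition qform A z : R := (z^T *m A *m z) 0 0.

Lemma qformE A z : qform A z = \sum_i \sum_j z i 0 * A i j * z j 0.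
Proof.
rewrite /qform mxE exchange_big; apply: eq_bigr => j _.
by rewrite mxE mulr_suml; apply: eq_bigr => i _; rewrite !mxE.
Qed.

Lemma qformD A B z : qform (A + B) z = qform A z + qform B z.
Proof. by rewrite /qform mulmxDr mulmxDl mxE. Qed.

Lemma qformZ a A z : qform (a *: A) z = a * qform A z.
Proof. by rewrite /qform -scalemxAr -scalemxAl mxE. Qed.

Lemma qform0 z : qform 0 z = 0.
Proof. by rewrite -(scale0r 0) qformZ mul0r. Qed.

Lemma qformB A B z : qform (A - B) z = qform A z - qform B z.
Proof. by rewrite qformD -scaleN1r qformZ mulN1r. Qed.

Lemma qform_sum (I : Type) (r : seq I) (P : pred I) (F : I -> 'M[R]_m) z :
  qform (\sum_(i <- r | P i) F i) z = \sum_(i <- r | P i) qform (F i) z.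
Proof. exact: (big_morph (qform^~ z) (fun A B => qformD A B z) (qform0 z)). Qed.

Lemma qformZr a A z : qform A (a *: z) = a ^+ 2 * qform A z.
Proof.
by rewrite /qform -scalemxAr linearZ /= -!scalemxAl !mxE expr2 mulrA.
Qed.

Lemma qform0r A : qform A 0 = 0.
Proof. by rewrite -(scale0r 0) qformZr expr0n mul0r. Qed.

Lemma qform1 z : qform 1%:M z = \sum_i z i 0 ^+ 2.
Proof.
rewrite qformE; apply: eq_bigr => i _; rewrite (bigD1 i) //= big1 ?addr0.
  by rewrite mxE eqxx mulr1 expr2.
by move=> j /negPf ji; rewrite mxE eq_sym ji mulr0 mul0r.
Qed.

Lemma qform1_ge0 z : 0 <= qform 1%:M z.
Proof. by rewrite qform1 sumr_ge0 // => i _; rewrite sqr_ge0. Qed.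

Lemma qform1_eq0 z : (qform 1%:M z == 0) = (z == 0).
Proof.
apply/idP/eqP => [|->]; last by rewrite qform0r.
rewrite qform1 psumr_eq0 => [/allP z0|i _]; last exact: sqr_ge0.
apply/matrixP => i j; rewrite ord1 mxE; apply/eqP.
by rewrite -sqrf_eq0; apply: z0; rewrite mem_index_enum.
Qed.

Lemma qform_delta a b z :
  qform ((delta_mx a 0 - delta_mx b 0 : 'cV_m) *m (delta_mx a 0 - delta_mx b 0)^T) z
  = (z a 0 - z b 0) ^+ 2.
Proof.
have zd : z^T *m (delta_mx a 0 - delta_mx b 0) = (row a z - row b z)^T.
  by rewrite !rowE [RHS]linearB /= !trmx_mul !trmx_delta mulmxBr.
have dz : (delta_mx a 0 - delta_mx b 0)^T *m z = row a z - row b z.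
  by rewrite -[RHS]trmxK -zd trmx_mul trmxK.
by rewrite /qform !mulmxA zd -mulmxA dz mxE big_ord1 !mxE expr2.
Qed.

Definition l1norm A : R := \sum_i \sum_j `|A i j|.

Lemma l1norm_ge0 A : 0 <= l1norm A.
Proof. by apply: sumr_ge0 => i _; apply: sumr_ge0. Qed.

Lemma sqr_coord_le_qform1 z i : z i 0 ^+ 2 <= qform 1%:M z.
Proof.
by rewrite qform1 (bigD1 i) //= lerDl; apply: sumr_ge0 => j _; apply: sqr_ge0.
Qed.

Lemma norm_qform_le A z : `|qform A z| <= l1norm A * qform 1%:M z.
Proof.
rewrite qformE /l1norm mulr_suml; apply: le_trans (ler_norm_sum _ _ _) _.
apply: ler_sum => i _; rewrite mulr_suml.
apply: le_trans (ler_norm_sum _ _ _) _; apply: ler_sum => j _.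
rewrite mulrAC !normrM mulrC ler_wpM2l //.
have := sqr_coord_le_qform1 z i; have := sqr_coord_le_qform1 z j.
rewrite -!(real_normK (num_real (z _ 0))).
have := normr_ge0 (z i 0); have := normr_ge0 (z j 0); nra.
Qed.

Lemma quadratic_ge0_lin0 (a b : R) :
  0 <= a -> (forall t, 0 <= 2 * t * b + t ^+ 2 * a) -> b = 0.
Proof.
move=> a_ge0 ge0; have a1_gt0 : 0 < a + 1 by rewrite ltr_wpDl.
have := ge0 (- b / (a + 1)).
have -> : 2 * (- b / (a + 1)) * b + (- b / (a + 1)) ^+ 2 * a
          = - (b ^+ 2 * (a + 2)) / (a + 1) ^+ 2 by field; rewrite gt_eqF.
rewrite pmulr_lge0 ?invr_gt0 ?exprn_gt0 // oppr_ge0 pmulr_lle0 ?ltr_wpDl //.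
by move=> b2_le0; apply/eqP; rewrite -sqrf_eq0 eq_le b2_le0 sqr_ge0.
Qed.

Lemma qform_addZ A x y t : A^T = A ->
  qform A (x + t *: y) = qform A x + 2 * t * (y^T *m A *m x) 0 0 + t ^+ 2 * qform A y.
Proof.
move=> symA.
have xy : (x^T *m A *m y) 0 0 = (y^T *m A *m x) 0 0.
  by rewrite -[x^T *m A *m y]trmxK [in LHS]mxE !trmx_mul trmxK symA mulmxA.
rewrite /qform [(x + _)^T]linearD /= [(t *: y)^T]linearZ /= !mulmxDl !mulmxDr.
by rewrite -!scalemxAl -!scalemxAr !mxE; move: xy; rewrite !mxE => ->; ring.
Qed.

(* Positivity at [x + t * A x] for every [t] kills the linear term
   [(A x)^T A x = |A x|^2]. *)
Lemma psd_qform_eq0 A x : A^T = A -> (forall y, 0 <= qform A y) ->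
  qform A x = 0 -> A *m x = 0.
Proof.
move=> symA psdA Ax0; set y := A *m x.
have yAx : (y^T *m A *m x) 0 0 = 0.
  apply: (quadratic_ge0_lin0 (psdA y)) => t.
  by have := psdA (x + t *: y); rewrite qform_addZ // Ax0 add0r.
by apply/eqP; rewrite -qform1_eq0 -yAx /qform mulmx1 -mulmxA.
Qed.

End QuadraticForm.

Section GramFamily.
Variables (R : rcfType) (m : nat).
Implicit Types (A B : 'M[R]_m) (z : 'cV[R]_m) (s t : seq 'cV[R]_m).

Definition qforms A s : R := \sum_(z <- s) qform A z.

Lemma qformsD A B s : qforms (A + B) s = qforms A s + qforms B s.
Proof. by rewrite /qforms -big_split; apply: eq_bigr => z _; rewrite qformD. Qed.

Lemma qformsZ a A s : qforms (a *: A) s = a * qforms A s.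
Proof. by rewrite /qforms mulr_sumr; apply: eq_bigr => z _; rewrite qformZ. Qed.

Lemma qformsB A B s : qforms (A - B) s = qforms A s - qforms B s.
Proof. by rewrite /qforms -sumrB; apply: eq_bigr => z _; rewrite qformB. Qed.

Lemma qforms0 s : qforms 0 s = 0.
Proof. by rewrite -(scale0r 0) qformsZ mul0r. Qed.

Lemma qforms_sum (I : Type) (r : seq I) (P : pred I) (F : I -> 'M[R]_m) s :
  qforms (\sum_(i <- r | P i) F i) s = \sum_(i <- r | P i) qforms (F i) s.
Proof. exact: (big_morph (qforms^~ s) (fun A B => qformsD A B s) (qforms0 s)). Qed.

Lemma qforms_seq1 A z : qforms A [:: z] = qform A z.
Proof. exact: big_seq1. Qed.

Lemma qforms_cat A s t : qforms A (s ++ t) = qforms A s + qforms A t.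
Proof. exact: big_cat. Qed.

Lemma qforms_scale A a s : qforms A [seq a *: z | z <- s] = a ^+ 2 * qforms A s.
Proof. by rewrite /qforms big_map mulr_sumr; apply: eq_bigr => z _; rewrite qformZr. Qed.

Lemma qforms_nth A s : qforms A s = \sum_(k < size s) qform A s`_k.
Proof. by rewrite /qforms (big_nth 0) big_mkord. Qed.

Lemma norm_qforms_le A s : `|qforms A s| <= l1norm A * qforms 1%:M s.
Proof.
rewrite /qforms mulr_sumr; apply: le_trans (ler_norm_sum _ _ _) _.
by apply: ler_sum => z _; apply: norm_qform_le.
Qed.

Lemma psd_qforms_le0 A s : A^T = A -> (forall z, 0 <= qform A z) ->
  qforms A s <= 0 -> forall z, z \in s -> A *m z = 0.
Proof.
move=> symA psdA As_le0 z z_s; apply: psd_qform_eq0 => //.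
have : qforms A s == 0 by rewrite eq_le As_le0 sumr_ge0.
by rewrite psumr_eq0 // => /allP/(_ z z_s)/eqP.
Qed.

Lemma qform_le0_unit A :
  (forall z, qform 1%:M z = 1 -> qform A z <= 0) -> forall z, qform A z <= 0.
Proof.
move=> A_le0 z; have [z0|q_gt0] := eqVneq (qform 1%:M z) 0.
  by move: z0 => /eqP; rewrite qform1_eq0 => /eqP->; rewrite qform0r.
have {}q_gt0 : 0 < qform 1%:M z by rewrite lt_def q_gt0 qform1_ge0.
have := A_le0 ((Num.sqrt (qform 1%:M z))^-1 *: z).
rewrite !qformZr exprVn sqr_sqrtr ?(ltW q_gt0) // mulVf ?gt_eqF // => /(_ erefl).
by rewrite pmulr_rle0 ?invr_gt0.
Qed.

Section Caratheodory.
Variables (J : finType) (F : J -> 'M[R]_m).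

(* The rows [(qform (F j) s`_k)_j] of [M] are linearly dependent, say
   [u *m M = 0]; rescaling [s`_k] by [sqrt (1 - u_k / u_k0)], with [k0] the
   largest entry of [u], keeps every sum and kills [s`_k0]. *)
Lemma qforms_drop_vector s : (#|J| < size s)%N ->
  exists2 t, size t = (size s).-1 & forall j, qforms (F j) t = qforms (F j) s.
Proof.
move=> J_lt_s; set T := size s.
pose M : 'M[R]_(T, #|J|) := \matrix_(k, j) qform (F (enum_val j)) s`_k.
have kerM : kermx M != 0.
  rewrite -mxrank_eq0 mxrank_ker -lt0n subn_gt0.
  exact: leq_ltn_trans (rank_leq_col M) J_lt_s.
have [u /sub_kermxP uM0 u_neq0] := rowV0Pn kerM.
have [k1 uk1] : exists k1, u 0 k1 != 0.
  apply/existsP; apply: contraNT u_neq0 => /existsPn u0.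
  by apply/eqP/rowP => k; rewrite mxE; apply/eqP/negbNE/u0.
pose k0 := [arg max_(k > k1) `|u 0 k|]%O.
have u_le k : `|u 0 k| <= `|u 0 k0| by rewrite /k0; case: arg_maxP => // i _; apply.
have uk0 : u 0 k0 != 0.
  by rewrite -normr_gt0; apply: lt_le_trans (u_le k1); rewrite normr_gt0.
pose c k := 1 - u 0 k / u 0 k0.
have c_ge0 k : 0 <= c k.
  rewrite subr_ge0; apply: le_trans (ler_norm _) _.
  by rewrite normf_div ler_pdivrMr ?mul1r ?normr_gt0.
pose t := [seq Num.sqrt (c k) *: s`_k | k : 'I_T].
have t0 : 0 \in t.
  by apply/imageP; exists k0 => //; rewrite /c divff // subrr sqrtr0 scale0r.
exists (rem 0 t); first by rewrite size_rem // size_map size_enum_ord.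
move=> j; have -> : qforms (F j) (rem 0 t) = qforms (F j) t.
  by rewrite [RHS](big_rem 0 t0) /= qform0r add0r.
rewrite [RHS]qforms_nth /qforms big_image /= (eq_bigl xpredT) //.
have Mj k : M k (enum_rank j) = qform (F j) s`_k by rewrite mxE enum_rankK.
have : (u *m M) 0 (enum_rank j) = 0 by rewrite uM0 mxE.
rewrite mxE => dep; apply/eqP; rewrite -subr_eq0 -sumrB; apply/eqP.
transitivity (- (u 0 k0)^-1 * \sum_k u 0 k * M k (enum_rank j)).
  by rewrite mulr_sumr; apply: eq_bigr => k _; rewrite qformZr sqr_sqrtr // Mj /c; field.
by rewrite dep mulr0.
Qed.

Lemma qforms_caratheodory s :
  exists2 t, (size t <= #|J|)%N & forall j, qforms (F j) t = qforms (F j) s.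
Proof.
have [k] := ubnP (size s); elim: k s => // k IH s size_s.
have [small|big] := leqP (size s) #|J|; first by exists s.
have [t size_t eq_t] := qforms_drop_vector big.
have [|t' small eq_t'] := IH t; first by rewrite size_t -ltnS prednK ?(leq_trans _ big).
by exists t' => // j; rewrite eq_t' eq_t.
Qed.

End Caratheodory.

Definition gram_image (I : finType) (F : I -> 'M[R]_m) (x : I -> R) : Prop :=
  exists2 s, qforms 1%:M s = 1 & forall i, x i = qforms (F i) s.

Lemma gram_image_unit (I : finType) (F : I -> 'M[R]_m) z :
  qform 1%:M z = 1 -> gram_image F (fun i => qform (F i) z).
Proof. by move=> z1; exists [:: z] => [|i]; rewrite qforms_seq1. Qed.

Lemma gram_image_convex (I : finType) (F : I -> 'M[R]_m) x y a :
  gram_image F x -> gram_image F y -> 0 <= a <= 1 ->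
  gram_image F (fun i => (1 - a) * x i + a * y i).
Proof.
move=> [s s1 xs] [t t1 yt] /andP[a_ge0 a_le1].
exists ([seq Num.sqrt (1 - a) *: z | z <- s] ++ [seq Num.sqrt a *: z | z <- t]).
  by rewrite qforms_cat !qforms_scale !sqr_sqrtr ?subr_ge0 // s1 t1 !mulr1 subrK.
by move=> i; rewrite qforms_cat !qforms_scale !sqr_sqrtr ?subr_ge0 // xs yt.
Qed.

Lemma gram_image_bounded (I : finType) (F : I -> 'M[R]_m) x i :
  gram_image F x -> `|x i| <= \sum_j l1norm (F j).
Proof.
move=> [s s1 ->]; apply: le_trans (norm_qforms_le _ _) _; rewrite s1 mulr1.
by rewrite (bigD1 i) //= lerDl sumr_ge0 // => j _; apply: l1norm_ge0.
Qed.

End GramFamily.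

Lemma max0_sqr_le (R : realDomainType) (a b : R) : a <= b -> Num.max a 0 ^+ 2 <= b ^+ 2.
Proof.
case: (leP a 0) => [_|a_gt0] a_le_b; first by rewrite expr0n sqr_ge0.
by rewrite ler_sqr ?nnegrE ?(ltW a_gt0) ?(le_trans (ltW a_gt0)).
Qed.

(* Moving from [x] towards [y] by [a], with [u] the gap [max (theta - x) 0]:
   since [u * (x + u) = u * theta], the new gap is at most
   [(1 - a) u + a (x + u - y)]. *)
Lemma gap_mix_sqr_le (R : realDomainType) (theta x y a : R)
    (u := Num.max (theta - x) 0) :
  Num.max (theta - ((1 - a) * x + a * y)) 0 ^+ 2
  <= (1 - a) ^+ 2 * u ^+ 2 + 2 * a * (1 - a) * (u * theta - u * y)
     + a ^+ 2 * (x + u - y) ^+ 2.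
Proof.
have ux : u * (x + u) = u * theta.
  by rewrite /u; case: (leP (theta - x) 0) => _; [rewrite !mul0r | ring].
rewrite -ux.
have -> : (1 - a) ^+ 2 * u ^+ 2 + 2 * a * (1 - a) * (u * (x + u) - u * y)
    + a ^+ 2 * (x + u - y) ^+ 2 = (x + u - ((1 - a) * x + a * y)) ^+ 2 by ring.
by apply: max0_sqr_le; rewrite lerD2r -lerBlDl /u le_max lexx.
Qed.

(* Blackwell approachability of the orthant [x >= theta]: mixing the current
   point with a response to its normalized gap vector, with weight [1/(t+2)],
   makes the squared distance [deficit] to the orthant decay like [C/(t+1)]. *)
Section Approachability.
Variables (R : archiRealFieldType) (I : finType) (K : (I -> R) -> Prop).
Variables (beta theta : R) (x0 : I -> R).
Hypothesis K_x0 : K x0.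
Hypothesis K_convex : forall x y a, K x -> K y -> 0 <= a <= 1 ->
  K (fun i => (1 - a) * x i + a * y i).
Hypothesis K_bounded : forall x i, K x -> `|x i| <= beta.
Hypothesis K_response : forall p : I -> R, (forall i, 0 <= p i) -> \sum_i p i = 1 ->
  exists2 y, K y & theta <= \sum_i p i * y i.

Let gap (x : I -> R) i := Num.max (theta - x i) 0.
Let deficit (x : I -> R) := \sum_i gap x i ^+ 2.
Let C := #|I|%:R * (`|theta| + 2 * beta) ^+ 2.

Let gap_ge0 x i : 0 <= gap x i.
Proof. by rewrite /gap le_max lexx orbT. Qed.

Let sqr_le_bound (r : R) : `|r| <= `|theta| + 2 * beta -> r ^+ 2 <= (`|theta| + 2 * beta) ^+ 2.
Proof.
move=> r_le; rewrite -real_normK ?num_real // ler_sqr ?nnegrE //.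
exact: le_trans r_le.
Qed.

Let sum_bound (f : I -> R) : (forall i, f i <= (`|theta| + 2 * beta) ^+ 2) -> \sum_i f i <= C.
Proof.
move=> f_le; apply: le_trans (ler_sum _ (fun i _ => f_le i)) _.
by rewrite sumr_const /C (mulr_natl _ #|I|).
Qed.

Let K_norml x i : K x -> - beta <= x i <= beta.
Proof. by move=> Kx; rewrite -ler_norml K_bounded. Qed.

Let deficit_le x : K x -> deficit x <= C.
Proof.
move=> Kx; apply: sum_bound => i; apply: sqr_le_bound.
have /andP[? ?] := K_norml i Kx; have := ler_norm theta; have := normr_ge0 theta.
move=> ? ?; rewrite (ger0_norm (gap_ge0 x i)) /gap ge_max; apply/andP; split; lra.
Qed.

Let exists_response x :
  exists2 y, K y & theta * \sum_i gap x i <= \sum_i gap x i * y i.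
Proof.
have [U0|U_neq0] := eqVneq (\sum_i gap x i) 0.
  exists x0 => //; rewrite U0 mulr0 big1 // => i _.
  by rewrite (psumr_eq0P (fun i _ => gap_ge0 x i) U0) ?mul0r.
have U_gt0 : 0 < \sum_i gap x i by rewrite lt_def U_neq0 sumr_ge0.
have p_ge0 i : 0 <= gap x i / \sum_j gap x j by rewrite divr_ge0 ?gap_ge0 ?ltW.
have p_sum1 : \sum_i gap x i / \sum_j gap x j = 1 by rewrite -mulr_suml divff.
have [y Ky resp] := K_response p_ge0 p_sum1.
exists y => //; rewrite -ler_pdivlMr // mulr_suml; apply: le_trans resp _.
by under eq_bigr do rewrite mulrAC.
Qed.

Let deficit_mix x y a : K x -> K y -> 0 <= a <= 1 ->
  theta * \sum_i gap x i <= \sum_i gap x i * y i ->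
  deficit (fun i => (1 - a) * x i + a * y i) <= (1 - a) ^+ 2 * deficit x + a ^+ 2 * C.
Proof.
move=> Kx Ky /andP[a_ge0 a_le1] resp.
apply: le_trans (ler_sum _ (fun i _ => gap_mix_sqr_le theta (x i) (y i) a)) _.
rewrite !big_split /= -!mulr_sumr -/(deficit x) sumrB -mulr_suml mulrC.
have mid : 2 * a * (1 - a) * (theta * \sum_i gap x i - \sum_i gap x i * y i) <= 0.
  by rewrite mulr_ge0_le0 ?subr_le0 // !mulr_ge0 // subr_ge0.
have last : \sum_i (x i + gap x i - y i) ^+ 2 <= C.
  apply: sum_bound => i; apply: sqr_le_bound; rewrite ler_norml.
  have /andP[? ?] := K_norml i Kx; have /andP[? ?] := K_norml i Ky.
  have := ler_norm theta; have := ler_norm (- theta); rewrite normrN.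
  have := normr_ge0 theta.
  by rewrite /gap maxEle; case: ifP => _ ? ? ?; apply/andP; split; lra.
have := ler_wpM2l (sqr_ge0 a) last; rewrite /deficit; lra.
Qed.

Let deficit_approach t : exists2 x, K x & deficit x <= C / t.+1%:R.
Proof.
elim: t => [|t [x Kx Dx]]; first by exists x0; rewrite // divr1 deficit_le.
have [y Ky resp] := exists_response x.
set a : R := t.+2%:R^-1.
have a01 : 0 <= a <= 1 by rewrite invr_ge0 ler0n invf_le1 ?ler1n ?ltr0Sn.
exists (fun i => (1 - a) * x i + a * y i); first exact: K_convex.
apply: le_trans (deficit_mix Kx Ky a01 resp) _.
apply: le_trans (_ : (1 - a) ^+ 2 * (C / t.+1%:R) + a ^+ 2 * C <= _).
  by rewrite lerD2r ler_wpM2l ?sqr_ge0.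
have t_ge0 : 0 <= t%:R :> R := ler0n _ _.
rewrite /a -!natr1 le_eqVlt; apply/orP; left; apply/eqP; field.
by rewrite !gt_eqF //; lra.
Qed.

Lemma approach_orthant eps : 0 < eps -> exists2 x, K x & forall i, theta - eps <= x i.
Proof.
move=> eps_gt0; set t := Num.bound (C / eps ^+ 2).
have [x Kx Dx] := deficit_approach t; exists x => // i.
have C_ge0 : 0 <= C by rewrite /C mulr_ge0 ?sqr_ge0.
have := archi_boundP (divr_ge0 C_ge0 (sqr_ge0 eps)).
rewrite -/t ltr_pdivrMr ?exprn_gt0 // => C_lt.
have C_le : C / t.+1%:R <= eps ^+ 2.
  by rewrite ler_pdivrMr ?ltr0Sn // -natr1; nra.
have gap_le : gap x i ^+ 2 <= eps ^+ 2.
  apply: le_trans C_le; apply: le_trans Dx.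
  by rewrite /deficit (bigD1 i) //= lerDl sumr_ge0 // => j _; apply: sqr_ge0.
have := gap_ge0 x i; have : theta - x i <= gap x i by rewrite /gap le_max lexx.
nra.
Qed.

End Approachability.

Section Multiplex.
Variables (R : realType) (N : nat) (e1 e2 : rel 'I_N).
Local Notation n := (N + N)%N.
Implicit Types (v : 'I_n -> 'cV[R]_n) (s : seq 'cV[R]_n) (w : 'I_N -> R).

(* The coordinate slices of an embedding are the columns of a Gram factor:
   [qforms A (slices v)] is the trace of [A] against the Gram matrix of [v]. *)
Definition slices v : seq 'cV[R]_n := [seq \col_a v a k 0 | k : 'I_n].

Definition embedding s : 'I_n -> 'cV[R]_n := fun a => \col_k s`_k a 0.

Lemma qforms_slices A v : qforms A (slices v) = \sum_k qform A (\col_a v a k 0).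
Proof. by rewrite /qforms big_image; apply: eq_bigl => k; rewrite inE. Qed.

Lemma qforms_embedding A s : (size s <= n)%N ->
  qforms A (slices (embedding s)) = qforms A s.
Proof.
move=> size_s; rewrite qforms_slices [RHS]qforms_nth.
rewrite (big_ord_widen n (fun k => qform A s`_k) size_s) [RHS]big_mkcond /=.
apply: eq_bigr => k _.
have -> : \col_a embedding s a k 0 = s`_k by apply/matrixP => a j; rewrite ord1 !mxE.
by case: ltnP => // k_ge; rewrite nth_default // qform0r.
Qed.

Lemma sqnorm_slices v (a b : 'I_n) : sqnorm (v a - v b) = qforms (Lij R a b) (slices v).
Proof.
rewrite qforms_slices; apply: eq_bigr => k _.
by rewrite qform_delta !mxE.
Qed.

Lemma sum_sqnorm_slices v : \sum_a sqnorm (v a) = qforms 1%:M (slices v).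
Proof.
rewrite qforms_slices exchange_big; apply: eq_bigr => k _.
by rewrite qform1; apply: eq_bigr => a _; rewrite mxE.
Qed.

Lemma Lw_sym w : (Lw e1 e2 w)^T = Lw e1 e2 w.
Proof.
have Lij_sym a b : (Lij R a b)^T = Lij R a b by rewrite /Lij trmx_mul trmxK.
rewrite /Lw /L0 /edge_sum !linearD /= !linear_sum /=.
congr (_ + (_ + _)); apply: eq_bigr => i _; first by rewrite linearZ /= Lij_sym.
all: by rewrite linear_sum; apply: eq_bigr => j _; apply: Lij_sym.
Qed.

Lemma emb_objE c xi v :
  emb_obj c e1 e2 xi v = c * xi + qforms (L0 R e1 e2) (slices v).
Proof.
rewrite /emb_obj /L0 qformsD /edge_sum !qforms_sum.
by congr (_ + (_ + _)); apply: eq_bigr => i _; rewrite qforms_sum;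
  apply: eq_bigr => j _; rewrite sqnorm_slices.
Qed.

Lemma qforms_Lw w s : qforms (Lw e1 e2 w) s
  = \sum_i w i * qforms (Lij R (lay1 i) (lay2 i)) s + qforms (L0 R e1 e2) s.
Proof.
by rewrite /Lw qformsD qforms_sum; congr (_ + _); apply: eq_bigr => i _; rewrite qformsZ.
Qed.

Lemma emb_obj_le_qforms_Lw c w xi v : 0 <= c -> (forall i, 0 <= w i) ->
  c <= \sum_i w i -> emb_feasible e1 e2 xi v ->
  emb_obj c e1 e2 xi v <= qforms (Lw e1 e2 w) (slices v).
Proof.
move=> c_ge0 w_ge0 c_le [xi_le _]; rewrite emb_objE qforms_Lw lerD2r.
have cut_ge0 i : 0 <= qforms (Lij R (lay1 i) (lay2 i)) (slices v).
  by rewrite -sqnorm_slices sumr_ge0 // => k _; apply: sqr_ge0.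
have [xi_ge0|xi_lt0] := leP 0 xi.
  apply: le_trans (_ : \sum_i w i * xi <= _).
    by rewrite -mulr_suml ler_wpM2r.
  by apply: ler_sum => i _; rewrite ler_wpM2l // -sqnorm_slices.
apply: le_trans (_ : 0 <= _); first by rewrite mulr_ge0_le0 // ltW.
by apply: sumr_ge0 => i _; rewrite mulr_ge0.
Qed.

Lemma slackness_eigenvector c w lam xi v : 0 <= c ->
  sdp_feasible c e1 e2 w lam -> emb_feasible e1 e2 xi v ->
  lam <= emb_obj c e1 e2 xi v ->
  forall p, Lw e1 e2 w *m proj p v = lam *: proj p v.
Proof.
move=> c_ge0 [negw c_le w_ge0] feas lam_le p.
set M := lam%:M - Lw e1 e2 w.
have symM : M^T = M by rewrite /M linearB /= tr_scalar_mx Lw_sym.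
have psdM z : 0 <= qform M z.
  by have := negw z; rewrite -/(qform _ z) /M !qformB; lra.
have M_le0 : qforms M (slices v) <= 0.
  rewrite /M qformsB -scalemx1 qformsZ -sum_sqnorm_slices feas.2 mulr1 subr_le0.
  exact: le_trans lam_le (emb_obj_le_qforms_Lw c_ge0 w_ge0 c_le feas).
have M_slice k : M *m \col_a v a k 0 = 0.
  by apply: (psd_qforms_le0 symM psdM M_le0); apply: image_f.
have proj_sum : proj p v = \sum_k p k 0 *: \col_a v a k 0.
  apply/matrixP => a j; rewrite ord1 summxE !mxE.
  by apply: eq_bigr => k _; rewrite !mxE.
have : M *m proj p v = 0.
  by rewrite proj_sum mulmx_sumr big1 // => k _; rewrite -scalemxAr M_slice scaler0.
by rewrite /M mulmxBl mul_scalar_mx => /eqP; rewrite subr_eq0 => /eqP <-.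
Qed.

(* [L(w)] for the weights putting the whole interlayer weight [c] on the
   edge [{i, N + i}]; weights of total mass [c] are mixtures of these. *)
Definition Lpure c i : 'M[R]_n := L0 R e1 e2 + c *: Lij R (lay1 i) (lay2 i).

Lemma qform_Lw_mix c p z : \sum_i p i = 1 ->
  qform (Lw e1 e2 (fun i => c * p i)) z = \sum_i p i * qform (Lpure c i) z.
Proof.
move=> p1; rewrite /Lw qformD qform_sum.
under [RHS]eq_bigr do rewrite qformD qformZ mulrDr.
rewrite big_split /= -mulr_suml p1 mul1r addrC; congr (_ + _).
by apply: eq_bigr => i _; rewrite qformZ mulrA [c * _]mulrC.
Qed.

Lemma sdp_opt_response c w lam p d : 0 <= c -> sdp_optimal c e1 e2 w lam ->
  (forall i, 0 <= p i) -> \sum_i p i = 1 -> 0 < d ->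
  exists2 z, qform 1%:M z = 1 & lam - d <= \sum_i p i * qform (Lpure c i) z.
Proof.
move=> c_ge0 [_ lam_min] p_ge0 p1 d_gt0; apply: NNPP => no_z.
suff feas : sdp_feasible c e1 e2 (fun i => c * p i) (lam - d) by have := lam_min _ _ feas; lra.
split; [|by rewrite -mulr_sumr p1 mulr1 | by move=> i; rewrite mulr_ge0].
apply: qform_le0_unit => z z1.
rewrite qformB -scalemx1 qformZ z1 mulr1 subr_le0 qform_Lw_mix //.
have [//|lt] := leP (\sum_i p i * qform (Lpure c i) z) (lam - d).
by case: no_z; exists z => //; apply: ltW.
Qed.

Lemma sdp_opt_gram_approx c w lam eps : (0 < N)%N -> 0 <= c ->
  sdp_optimal c e1 e2 w lam -> 0 < eps ->
  exists2 s, qforms 1%:M s = 1 & forall i, lam - eps <= qforms (Lpure c i) s.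
Proof.
move=> N_gt0 c_ge0 opt eps_gt0; set a := lay1 (Ordinal N_gt0).
have unit_a : qform 1%:M (delta_mx a 0 : 'cV[R]_n) = 1.
  rewrite qform1 (bigD1 a) //= big1 ?addr0 => [|b /negPf ba]; rewrite mxE ?eqxx.
    exact: expr1n.
  by rewrite ba expr0n.
have response p : (forall i, 0 <= p i) -> \sum_i p i = 1 ->
    exists2 y, gram_image (Lpure c) y & lam - eps / 2 <= \sum_i p i * y i.
  move=> p_ge0 p1; have [|z z1 z_ge] := sdp_opt_response (d := eps / 2) c_ge0 opt p_ge0 p1.
    by rewrite divr_gt0.
  by exists (fun i => qform (Lpure c i) z); first exact: gram_image_unit.
have [|x [s s1 xs] x_ge] := approach_orthant (gram_image_unit (Lpure c) unit_a)
  (@gram_image_convex _ _ _ _) (@gram_image_bounded _ _ _ _) response (eps := eps / 2).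
  by rewrite divr_gt0.
by exists s => // i; rewrite -xs; have := x_ge i; lra.
Qed.

Lemma emb_near_sdp_opt c w lam eps : (0 < N)%N -> 0 <= c ->
  sdp_optimal c e1 e2 w lam -> 0 < eps ->
  exists xi v, emb_feasible e1 e2 xi v /\ lam - eps <= emb_obj c e1 e2 xi v.
Proof.
move=> N_gt0 c_ge0 opt eps_gt0.
have [s s1 s_ge] := sdp_opt_gram_approx N_gt0 c_ge0 opt eps_gt0.
pose F (j : option 'I_N) := if j is Some i then Lpure c i else 1%:M.
have [t t_size t_eq] := qforms_caratheodory F s.
have t_n : (size t <= n)%N.
  by rewrite (leq_trans t_size) // card_option card_ord -addn1 leq_add2l.
pose v := embedding t; pose cut i := sqnorm (v (lay1 i) - v (lay2 i)).
have v1 : \sum_a sqnorm (v a) = 1.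
  by rewrite sum_sqnorm_slices qforms_embedding // (t_eq None).
have v_ge i : lam - eps <= qforms (L0 R e1 e2) (slices v) + c * cut i.
  by rewrite /cut sqnorm_slices -qformsZ -qformsD !qforms_embedding // (t_eq (Some i)) s_ge.
have cut_ge0 i : 0 <= cut i by apply: sumr_ge0 => k _; apply: sqr_ge0.
have [c0|c_gt0] := eqVneq c 0.
  exists 0, v; split => //; rewrite emb_objE c0 mul0r add0r.
  by have := v_ge (Ordinal N_gt0); rewrite c0 mul0r addr0.
have {}c_gt0 : 0 < c by rewrite lt_def c_gt0.
exists ((lam - eps - qforms (L0 R e1 e2) (slices v)) / c), v; split.
  split => // i; rewrite ler_pdivrMr // mulrC; have := v_ge i; rewrite /cut; lra.
by rewrite emb_objE mulrC divfK ?gt_eqF //; lra.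
Qed.

Lemma sdp_opt_le_emb_opt c w lam xi v : 0 <= c ->
  sdp_optimal c e1 e2 w lam -> emb_optimal c e1 e2 xi v ->
  lam <= emb_obj c e1 e2 xi v.
Proof.
move=> c_ge0 opt [[_ v1] v_max].
have N_gt0 : (0 < N)%N.
  rewrite lt0n; apply/eqP => N0; move: v1; rewrite big1 => [/eqP|a _].
    by rewrite eq_sym oner_eq0.
  by exfalso; move: (ltn_ord a); move: (nat_of_ord a); rewrite N0.
apply/ler_addgt0Pr => eps eps_gt0.
have [xi' [v' [feas obj_ge]]] := emb_near_sdp_opt N_gt0 c_ge0 opt eps_gt0.
have := v_max xi' v' feas; lra.
Qed.

End Multiplex.

Theorem proposition5 (R : realType) (N : nat) (e1 e2 : rel 'I_N)
    (e1_sym : symmetric e1) (e1_irr : irreflexive e1)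
    (e2_sym : symmetric e2) (e2_irr : irreflexive e2)
    (c : R) (hc : 0 <= c)
    (wstar : 'I_N -> R) (lamstar : R)
    (hw : sdp_optimal c e1 e2 wstar lamstar)
    (xi : R) (v : 'I_(N + N) -> 'cV[R]_(N + N))
    (hv : emb_optimal c e1 e2 xi v) :
  forall p : 'cV[R]_(N + N),
    Lw e1 e2 wstar *m proj p v = lamstar *: proj p v.
Proof.
exact: slackness_eigenvector hc hw.1 hv.1 (sdp_opt_le_emb_opt hc hw hv).
Qed.
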